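(* Let $n\geq1$ and define the linear map $$\alpha:CF(n)\oplus CF(n)\oplus\mathrm{Ker}(\partial_n)\oplus\mathrm{Ker}(\partial_n)\to\mathrm{Im}(\partial_n)\oplus\mathrm{Ker}(\partial_n),$$ $$(u,v,w,t)\mapsto(\partial_n\eta_n u+\partial_n v,\ \partial_n\eta_n u+w+t+\eta_n w).$$ Then $\mathrm{Ker}(\alpha)$ is exactly the set of $(u,v,w,t)$ in the domain of $\alpha$ satisfying $$\partial_nv=w+t+\eta_n w,\qquad \partial_nu=w+\eta_n t+\eta_n w,\qquad \partial_nw=0.$$
   Context: $CF(n)$ is the $\mathbb{Z}_2$-vector space with basis the tuples $(\epsilon_1,\dots,\epsilon_{2n-1})\in\{\pm1\}^{2n-1}$. Linear maps $\eta_n,\tilde\partial_n:CF(n)\to CF(n)$ are given on basis elements by $\eta_n(\epsilon_1,\dots,\epsilon_{2n-1})=(-\epsilon_1,\dots,-\epsilon_{2n-1})$ and $\tilde\partial_n(\epsilon_1,\dots,\epsilon_{2n-1})=\sum_{i=1}^{2n-1}(\epsilon_1,\dots,-\epsilon_i,\dots,\epsilon_{2n-1})$, and $\partial_n=\tilde\partial_n+\eta_n$. *)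

From HB Require Import structures.
From mathcomp Require Import all_boot all_order all_algebra.
Set Implicit Arguments. Unset Strict Implicit. Unset Printing Implicit Defensive.
Import GRing.Theory.
Local Open Scope ring_scope.

(* Basis tuples (eps_1,...,eps_{2n-1}) in {+-1}^{2n-1}, encoded as functions
   'I_(2n-1) -> bool with true = +1 and false = -1. *)
Notation basisCF n := {ffun 'I_(2 * n - 1) -> bool}.

(* CF(n): the Z_2-vector space with basis basisCF n (finite, so all functions). *)
Notation CF n := {ffun basisCF n -> 'F_2}.

Definition bvec (n : nat) (e : basisCF n) : CF n := [ffun y => (y == e)%:R].

Definition negB (n : nat) (e : basisCF n) : basisCF n := [ffun j => ~~ e j].
Definition flipB (n : nat) (i : 'I_(2 * n - 1)) (e : basisCF n) : basisCF n :=
  [ffun j => if j == i then ~~ e j else e j].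

(* linear extensions of the maps given on basis elements:
   eta f = sum_e f(e) . bvec(-e),  dtilde f = sum_e f(e) . sum_i bvec(flip_i e),
   written coordinatewise since 'F_2 scalars act on CF n by pointwise product. *)
Definition eta (n : nat) (f : CF n) : CF n :=
  [ffun y => \sum_(e : basisCF n) f e * bvec (negB e) y].
Definition dtilde (n : nat) (f : CF n) : CF n :=
  [ffun y => \sum_(e : basisCF n) f e * \sum_(i < 2 * n - 1) bvec (flipB i e) y].
Definition bd (n : nat) (f : CF n) : CF n := dtilde f + eta f.

From mathcomp Require Import all_boot all_order all_algebra.
Import GRing.Theory.
Local Open Scope ring_scope.

(* Over Z_2 a sum vanishes iff its two terms agree, and eta is an additive
   involution commuting with the differential. So alpha(u,v,w,t) = 0 says
   eta (bd u) = bd v and eta (bd u) = w + t + eta w; applying eta to the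
   latter gives bd u = w + eta t + eta w. *)

Section Char2Involution.

Variable V : zmodType.
Hypothesis oppV : forall x : V, - x = x.
Variables (eta bd : V -> V).
Hypothesis etaK : involutive eta.
Hypothesis etaD : {morph eta : x y / x + y}.
Hypothesis bd_eta : forall x, bd (eta x) = eta (bd x).

Lemma addr_eq0_char2 (x y : V) : x + y = 0 <-> x = y.
Proof.
split=> [/eqP|->]; last by rewrite -{1}(oppV y) addNr.
by rewrite addr_eq0 oppV => /eqP.
Qed.

Lemma eta_eq (x y : V) : eta x = y <-> x = eta y.
Proof. by split=> [<-|->]; rewrite etaK. Qed.

Lemma kernel_equations (u v w t : V) : bd w = 0 ->
  ((bd (eta u) + bd v = 0 /\ bd (eta u) + w + t + eta w = 0) <->
   [/\ bd v = w + t + eta w, bd u = w + eta t + eta w & bd w = 0]).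
Proof.
move=> bdw0; rewrite bd_eta -!addrA.
have eta_s : eta (w + (t + eta w)) = w + (eta t + eta w).
  by rewrite !etaD etaK addrC addrAC addrC.
split=> [[/addr_eq0_char2 eta_bdu_v /addr_eq0_char2 eta_bdu]|[bdv bdu _]].
  by split=> //; [rewrite -eta_bdu_v eta_bdu | rewrite -eta_s; apply/eta_eq].
have eta_bdu : eta (bd u) = w + (t + eta w) by apply/eta_eq; rewrite bdu eta_s.
by split; apply/addr_eq0_char2; rewrite eta_bdu // bdv.
Qed.

End Char2Involution.

Lemma negBK n : involutive (@negB n).
Proof. by move=> e; apply/ffunP=> j; rewrite !ffunE negbK. Qed.

Lemma flipBK n i : involutive (@flipB n i).
Proof. by move=> e; apply/ffunP=> j; rewrite !ffunE; case: eqP => // ->; rewrite negbK. Qed.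

Lemma negB_flipB n i (e : basisCF n) : negB (flipB i e) = flipB i (negB e).
Proof. by apply/ffunP=> j; rewrite !ffunE; case: eqP. Qed.

Lemma etaE n (f : CF n) y : eta f y = f (negB y).
Proof.
rewrite ffunE (bigD1 (negB y)) //= big1 ?addr0; first by rewrite ffunE negBK eqxx mulr1.
move=> e ney; rewrite ffunE; case: eqP => [yE|]; last by rewrite mulr0.
by rewrite yE negBK eqxx in ney.
Qed.

Lemma dtildeE n (f : CF n) y : dtilde f y = \sum_(i < 2 * n - 1) f (flipB i y).
Proof.
rewrite ffunE; under eq_bigr do rewrite mulr_sumr.
rewrite exchange_big /=; apply: eq_bigr => i _.
rewrite (bigD1 (flipB i y)) //= big1 ?addr0; first by rewrite ffunE flipBK eqxx mulr1.
move=> e ney; rewrite ffunE; case: eqP => [yE|]; last by rewrite mulr0.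
by rewrite yE flipBK eqxx in ney.
Qed.

Lemma etaK n : involutive (@eta n).
Proof. by move=> f; apply/ffunP=> y; rewrite !etaE negBK. Qed.

Lemma etaD n : {morph @eta n : f g / f + g}.
Proof. by move=> f g; apply/ffunP=> y; rewrite etaE [LHS]ffunE [RHS]ffunE !etaE. Qed.

Lemma bd_eta n (f : CF n) : bd (eta f) = eta (bd f).
Proof.
apply/ffunP=> y; rewrite etaE /bd [LHS]ffunE [in RHS]ffunE !dtildeE !etaE negBK.
by congr (_ + _); apply: eq_bigr => i _; rewrite etaE negB_flipB.
Qed.

Lemma oppCF n (f : CF n) : - f = f.
Proof. by apply/ffunP=> y; rewrite ffunE oppr_pchar2 // pchar_Fp. Qed.

Theorem lemma4p4 (n : nat) (hn : (1 <= n)%N) (u v w t : CF n) :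
  bd w = 0 -> bd t = 0 ->
  ((bd (eta u) + bd v = 0 /\ bd (eta u) + w + t + eta w = 0) <->
   [/\ bd v = w + t + eta w, bd u = w + eta t + eta w & bd w = 0]).
Proof.
(* [bd t = 0] only says that t lies in the domain of alpha. *)
move=> bdw0 _.
exact: (@kernel_equations _ (@oppCF n) _ _ (@etaK n) (@etaD n) (@bd_eta n) u v w t bdw0).
Qed.
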